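(* Let $Q$ be a $3$-divisible Moufang loop and let $X$ be a $2$-divisible normal subloop of $Q$ that is a commutative group. Then the congruence $\{aX:a\in Q\}$ on $Q$ induced by $X$ is an abelian congruence of $Q$.
   Context: A loop is a magma $(Q,\cdot,1)$ with identity in which all left and right translations are bijections; it is Moufang if it satisfies $xy\cdot zx=(x\cdot yz)x$ for all $x,y,z$ (Moufang loops are power associative). A power associative loop is $d$-divisible if the map $x\mapsto x^d$ is surjective. A subloop is normal if it is the kernel of a loop homomorphism. For a normal subloop $X$ of $Q$, the induced congruence has classes $aX$; it is abelian if its Freese–McKenzie commutator with itself is trivial; equivalently, $Q$ is isomorphic to an abelian extension of $X$ by $Q/X$: a loop on $Q/X\times X$ with $(r,x)(s,y)=(rs,\varphi_{r,s}(x)+\psi_{r,s}(y)+\theta_{r,s})$, $\varphi_{r,s},\psi_{r,s}\in\mathrm{Aut}(X)$, $\theta_{r,s}\in X$, $\varphi_{r,1}=\mathrm{id}=\psi_{1,r}$, $\theta_{1,r}=0=\theta_{r,1}$. *)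

(* The division axioms say exactly
   that all left translations L_x : y |-> x y and right translations
   R_x : y |-> y x are bijections (with inverses y |-> x \ y and y |-> y / x). *)
Record Loop : Type := {
  carrier :> Type;
  mul : carrier -> carrier -> carrier;
  ldiv : carrier -> carrier -> carrier;
  rdiv : carrier -> carrier -> carrier;   (* y / x *)
  one : carrier;
  mul1l : forall x, mul one x = x;
  mulr1 : forall x, mul x one = x;
  ldivK : forall x y, ldiv x (mul x y) = y;
  mulldiv : forall x y, mul x (ldiv x y) = y;
  rdivK : forall x y, rdiv (mul y x) x = y;
  mulrdiv : forall x y, mul (rdiv y x) x = y
}.
Arguments mul {l}. Arguments ldiv {l}. Arguments rdiv {l}. Arguments one {l}.

Definition Moufang (Q : Loop) : Prop :=
  forall x y z : Q, mul (mul x y) (mul z x) = mul (mul x (mul y z)) x.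

(* Powers x^n (well defined in power-associative loops, e.g. Moufang loops). *)
Fixpoint lpow {Q : Loop} (x : Q) (n : nat) : Q :=
  match n with
  | O => one
  | S n => mul x (lpow x n)
  end.

Definition divisible (Q : Loop) (d : nat) : Prop :=
  forall y : Q, exists x : Q, lpow x d = y.

Definition loop_hom {Q L : Loop} (f : Q -> L) : Prop :=
  forall x y : Q, f (mul x y) = mul (f x) (f y).

Definition normal_subloop (Q : Loop) (X : Q -> Prop) : Prop :=
  exists (L : Loop) (f : Q -> L), loop_hom f /\ (forall x, X x <-> f x = one).

Definition sub_commutative_group (Q : Loop) (X : Q -> Prop) : Prop :=
  (forall x y z, X x -> X y -> X z -> mul (mul x y) z = mul x (mul y z)) /\
  (forall x y, X x -> X y -> mul x y = mul y x).

Definition sub_divisible (Q : Loop) (X : Q -> Prop) (d : nat) : Prop :=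
  forall y, X y -> exists x, X x /\ lpow x d = y.

(* The congruence induced by X: a ~ b iff aX = bX, i.e. b = a x with x in X. *)
Definition cong_of (Q : Loop) (X : Q -> Prop) (a b : Q) : Prop :=
  exists x, X x /\ b = mul a x.

Inductive term : Type :=
  | tX : nat -> term
  | tY : nat -> term
  | tOne : term
  | tMul : term -> term -> term
  | tLdiv : term -> term -> term
  | tRdiv : term -> term -> term.

Fixpoint teval {Q : Loop} (ex ey : nat -> Q) (t : term) : Q :=
  match t with
  | tX n => ex n
  | tY n => ey n
  | tOne => one
  | tMul s u => mul (teval ex ey s) (teval ex ey u)
  | tLdiv s u => ldiv (teval ex ey s) (teval ex ey u)
  | tRdiv s u => rdiv (teval ex ey s) (teval ex ey u)
  end.

(* Term condition C(alpha, alpha; 0): for every term t(x, y) and tuples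
   a alpha b, c alpha d (componentwise),
   t(a, c) = t(a, d) implies t(b, c) = t(b, d).
   This says alpha centralizes itself, i.e. [alpha, alpha] = 0 (for loops,
   a Mal'cev variety, this is the Freese-McKenzie commutator): alpha is an
   abelian congruence. *)
Definition abelian_congruence (Q : Loop) (alpha : Q -> Q -> Prop) : Prop :=
  forall (t : term) (a b c d : nat -> Q),
    (forall i, alpha (a i) (b i)) -> (forall i, alpha (c i) (d i)) ->
    teval a c t = teval a d t ->
    teval b c t = teval b d t.

From Stdlib Require Import Setoid.

(* In a 3-divisible Moufang loop multiplication is affine on the cosets of X:
   for all p, q there are endomorphisms al, be of X with
   px . qy = pq . (al x . be y) for x, y in X.  They come from an autotopism
   whose first two components send 1 to p and q (this is where 3-divisibility
   enters) and whose components are products of translations.  The inner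
   mappings of such products are pseudo-automorphisms, hence preserve
   u(vu); on the 2-divisible abelian group X this forces them to be
   endomorphisms.  By induction on terms, every term operation is then affine
   on cosets, t(a u, c v) = t(a, c) . F(u, v) with F a homomorphism into X,
   and the term condition follows: t(a, c) = t(a, d) means F(1, v) = 1, so
   t(b, c) = t(b, d). *)

Local Infix "⋅" := mul (at level 40, left associativity).

Definition inv {Q : Loop} (x : Q) : Q := ldiv x one.

Section LoopFacts.
Context {Q : Loop}.
Implicit Types x y z u v w : Q.

Lemma mulgI x y z : x ⋅ y = x ⋅ z -> y = z.
Proof. intro E. rewrite <- (ldivK _ x y), E. apply ldivK. Qed.

Lemma mulIg x y z : y ⋅ x = z ⋅ x -> y = z.
Proof. intro E. rewrite <- (rdivK _ x y), E. apply rdivK. Qed.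

Lemma ldivv x : ldiv x x = one.
Proof. apply (mulgI x). rewrite mulldiv, mulr1. reflexivity. Qed.

Lemma mulgV x : x ⋅ inv x = one.
Proof. apply mulldiv. Qed.

Definition autotopism (a b c : Q -> Q) : Prop := forall u v, a u ⋅ b v = c (u ⋅ v).

Lemma autotopism_comp a b c a' b' c' :
  autotopism a b c -> autotopism a' b' c' ->
  autotopism (fun w => a (a' w)) (fun w => b (b' w)) (fun w => c (c' w)).
Proof. intros H H' u v. rewrite H, H'. reflexivity. Qed.

Lemma autotopism_inv a b c a' b' c' :
  autotopism a b c -> (forall u, a (a' u) = u) -> (forall u, b (b' u) = u) ->
  (forall u, c' (c u) = u) -> autotopism a' b' c'.
Proof.
  intros H aa' bb' c'c u v.
  rewrite <- (aa' u) at 2. rewrite <- (bb' v) at 2. rewrite H, c'c. reflexivity.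
Qed.

Lemma autotopism_ext a b c c' :
  (forall w, c w = c' w) -> autotopism a b c -> autotopism a b c'.
Proof. intros E H u v. rewrite <- E. apply H. Qed.

Definition delta (t : Q -> Q) u : Q -> Q := fun e => ldiv (t u) (t (u ⋅ e)).

Lemma delta_spec t u e : t (u ⋅ e) = t u ⋅ delta t u e.
Proof. unfold delta. rewrite mulldiv. reflexivity. Qed.

Lemma delta_comp t t' u e :
  delta (fun w => t (t' w)) u e = delta t (t' u) (delta t' u e).
Proof. unfold delta. rewrite mulldiv. reflexivity. Qed.

Lemma delta1 t u : delta t u one = one.
Proof. unfold delta. rewrite mulr1. apply ldivv. Qed.

Lemma teval_ext (ex ey ex' ey' : nat -> Q) t :
  (forall i, ex i = ex' i) -> (forall i, ey i = ey' i) -> teval ex ey t = teval ex' ey' t.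
Proof. intros Ex Ey. induction t; simpl; congruence. Qed.

End LoopFacts.

Section LoopHom.
Context {Q L : Loop} {f : Q -> L}.
Hypothesis f_mul : loop_hom f.

Lemma loop_hom1 : f one = one.
Proof. apply (mulgI (f one)). rewrite <- f_mul, !mulr1. reflexivity. Qed.

Lemma loop_hom_ldiv a b : f (ldiv a b) = ldiv (f a) (f b).
Proof. apply (mulgI (f a)). rewrite <- f_mul, !mulldiv. reflexivity. Qed.

Lemma loop_hom_rdiv a b : f (rdiv a b) = rdiv (f a) (f b).
Proof. apply (mulIg (f b)). rewrite <- f_mul, !mulrdiv. reflexivity. Qed.

End LoopHom.

Section MoufangLoop.
Variable Q : Loop.
Hypothesis HM : Moufang Q.
Implicit Types x y z u v w : Q.

Lemma flexible x y : x ⋅ (y ⋅ x) = (x ⋅ y) ⋅ x.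
Proof. pose proof (HM x one y) as E. rewrite mulr1, mul1l in E. exact E. Qed.

Lemma mulKVg x y : x ⋅ (inv x ⋅ y) = y.
Proof.
  pose proof (HM x (inv x) y) as E. rewrite mulgV, mul1l in E.
  symmetry. exact (mulIg _ _ _ E).
Qed.

Lemma mulKg x y : inv x ⋅ (x ⋅ y) = y.
Proof. apply (mulgI x). rewrite mulKVg. reflexivity. Qed.

Lemma mulVg x : inv x ⋅ x = one.
Proof. pose proof (mulKg x one) as E. rewrite mulr1 in E. exact E. Qed.

Lemma mulgKV x y : (y ⋅ inv x) ⋅ x = y.
Proof.
  pose proof (HM x y (inv x)) as E. rewrite mulVg, mulr1, <- flexible in E.
  symmetry. exact (mulgI _ _ _ E).
Qed.

Lemma mulgK x y : (y ⋅ x) ⋅ inv x = y.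
Proof. apply (mulIg x). rewrite mulgKV. reflexivity. Qed.

Lemma invgK x : inv (inv x) = x.
Proof. apply (mulgI (inv x)). rewrite mulgV, mulVg. reflexivity. Qed.

Lemma invMg x y : inv (x ⋅ y) = inv y ⋅ inv x.
Proof.
  assert (E : inv (x ⋅ y) ⋅ ((x ⋅ y) ⋅ inv y) = inv y) by apply mulKg.
  rewrite mulgK in E. rewrite <- E, mulgK. reflexivity.
Qed.

Lemma ldivE x y : ldiv x y = inv x ⋅ y.
Proof. rewrite <- (mulKVg x y) at 1. apply ldivK. Qed.

Lemma rdivE x y : rdiv y x = y ⋅ inv x.
Proof. rewrite <- (mulgKV x y) at 1. apply rdivK. Qed.

Lemma autotopism_LR x : autotopism (mul x) (fun v => v ⋅ x) (fun w => (x ⋅ w) ⋅ x).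
Proof. intros u v. apply HM. Qed.

Lemma autotopism_sigma x : autotopism (fun v => (x ⋅ v) ⋅ x) (mul (inv x)) (mul x).
Proof.
  intros u v. pose proof (HM x (u ⋅ v) (inv v)) as E. rewrite mulgK in E.
  rewrite <- E, <- (invgK v), <- invMg, !invgK, mulgK. reflexivity.
Qed.

Lemma autotopism_rho x : autotopism (fun u => u ⋅ inv x) (fun w => (x ⋅ w) ⋅ x) (fun w => w ⋅ x).
Proof.
  intros u v. pose proof (HM x (inv u) (u ⋅ v)) as E. rewrite mulKg in E.
  rewrite <- E, <- (invgK u) at 1. rewrite <- invMg, mulKg. reflexivity.
Qed.

Lemma autotopism_sigmaV x :
  autotopism (fun v => inv x ⋅ (v ⋅ inv x)) (mul x) (mul (inv x)).
Proof.
  apply (autotopism_inv _ _ _ _ _ _ (autotopism_sigma x)); intro u.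
  - rewrite mulKVg, mulgKV. reflexivity.
  - apply mulKg.
  - apply mulKg.
Qed.

Definition pseudo_aut (g : Q -> Q) (k : Q) : Prop :=
  forall u v, g (u ⋅ v) = (g u ⋅ k) ⋅ (inv k ⋅ g v).

Lemma pseudo_aut_of_autotopism a b c :
  autotopism a b c -> c one = one -> pseudo_aut c (a one).
Proof.
  intros H c1 u v.
  assert (b1 : b one = inv (a one)).
  { apply (mulgI (a one)). rewrite H, mulr1, c1, mulgV. reflexivity. }
  assert (au : a u = c u ⋅ a one).
  { rewrite <- (mulr1 _ u) at 2. rewrite <- H, b1, mulgKV. reflexivity. }
  assert (bv : b v = inv (a one) ⋅ c v).
  { rewrite <- (mul1l _ v) at 2. rewrite <- H, mulKg. reflexivity. }
  rewrite <- H, au, bv. reflexivity.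
Qed.

Lemma pseudo_aut_sandwich g k :
  pseudo_aut g k -> forall u v, g (u ⋅ (v ⋅ u)) = g u ⋅ (g v ⋅ g u).
Proof.
  intros H u v.
  assert (shift : forall y w, inv k ⋅ ((y ⋅ k) ⋅ (inv k ⋅ w)) = (inv k ⋅ y) ⋅ w).
  { intros y w. pose proof (autotopism_sigma k (inv k ⋅ y) w) as E. simpl in E.
    rewrite mulKVg in E. rewrite E, mulKg. reflexivity. }
  rewrite H, (H v u), shift, HM, mulKVg, flexible. reflexivity.
Qed.

Section Cosets.
Variables (X : Q -> Prop) (L : Loop) (f : Q -> L).
Hypothesis f_mul : loop_hom f.
Hypothesis X_ker : forall x, X x <-> f x = one.
Hypothesis X_assoc : forall x y z, X x -> X y -> X z -> (x ⋅ y) ⋅ z = x ⋅ (y ⋅ z).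
Hypothesis X_comm : forall x y, X x -> X y -> x ⋅ y = y ⋅ x.
Hypothesis X_sqrt : sub_divisible Q X 2.
Hypothesis Q_cbrt : divisible Q 3.

Lemma X_one : X one.
Proof. apply X_ker, loop_hom1, f_mul. Qed.

Lemma X_mul x y : X x -> X y -> X (x ⋅ y).
Proof. rewrite !X_ker, f_mul. intros -> ->. apply mulr1. Qed.

Lemma X_ldivP x y : X (ldiv x y) <-> f x = f y.
Proof.
  rewrite X_ker, (loop_hom_ldiv f_mul). split.
  - intro E. rewrite <- (mulldiv _ (f x) (f y)), E, mulr1. reflexivity.
  - intros ->. apply ldivv.
Qed.

Lemma X_swap a b c d : X a -> X b -> X c -> X d -> (a ⋅ b) ⋅ (c ⋅ d) = (a ⋅ c) ⋅ (b ⋅ d).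
Proof.
  intros Xa Xb Xc Xd.
  rewrite X_assoc, <- (X_assoc b c d), (X_comm b c), (X_assoc c b d), <- (X_assoc a c);
    auto using X_mul.
Qed.

Definition X_endo (g : Q -> Q) : Prop :=
  (forall x, X x -> X (g x)) /\ (forall x y, X x -> X y -> g (x ⋅ y) = g x ⋅ g y).

Lemma X_endo1 g : X_endo g -> g one = one.
Proof.
  intros [Xg g_mul]. apply (mulgI (g one)). rewrite <- g_mul, !mulr1; auto using X_one.
Qed.

Lemma X_endo_ext g g' : (forall x, g x = g' x) -> X_endo g -> X_endo g'.
Proof. intros E [Xg g_mul]. split; intros; rewrite <- ?E; auto. Qed.

Lemma X_endo_comp g g' : X_endo g -> X_endo g' -> X_endo (fun x => g (g' x)).
Proof.
  intros [Xg g_mul] [Xg' g'_mul]. split; intros; [auto|]. rewrite g'_mul, g_mul; auto.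
Qed.

Lemma X_endo_split al be x y x' y' :
  X_endo al -> X_endo be -> X x -> X y -> X x' -> X y' ->
  (al x ⋅ be y) ⋅ (al x' ⋅ be y') = al (x ⋅ x') ⋅ be (y ⋅ y').
Proof.
  intros [Xal al_mul] [Xbe be_mul] Xx Xy Xx' Xy'.
  rewrite al_mul, be_mul by assumption. apply X_swap; auto.
Qed.

Lemma X_endo_of_sandwich g :
  g one = one -> (forall u v, g (u ⋅ (v ⋅ u)) = g u ⋅ (g v ⋅ g u)) ->
  (forall x, X x -> X (g x)) -> X_endo g.
Proof.
  intros g1 g_sandwich Xg. split; [exact Xg|].
  assert (g_sq : forall a, g (a ⋅ a) = g a ⋅ g a).
  { intro a. pose proof (g_sandwich a one) as E. rewrite !mul1l, g1, mul1l in E. exact E. }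
  intros x y Xx Xy. destruct (X_sqrt x Xx) as [a [Xa <-]]. simpl. rewrite mulr1.
  replace ((a ⋅ a) ⋅ y) with (a ⋅ (y ⋅ a)) by (rewrite (X_comm y a), X_assoc; auto).
  rewrite g_sandwich, g_sq, (X_comm (g y) (g a)), X_assoc; auto.
Qed.

Definition affine (t : Q -> Q) : Prop := forall u, X_endo (delta t u).

Lemma affine_comp t t' : affine t -> affine t' -> affine (fun w => t (t' w)).
Proof.
  intros Ht Ht' u.
  apply (X_endo_ext (fun e => delta t (t' u) (delta t' u e))).
  - intro e. symmetry. apply delta_comp.
  - apply X_endo_comp; [apply Ht | apply Ht'].
Qed.

Lemma affine_of_autotopic t :
  (forall u e, X e -> X (delta t u e)) ->
  (forall u, exists a b, autotopism a b (delta t u)) -> affine t.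
Proof.
  intros Xt Ht u. destruct (Ht u) as [a [b Hab]].
  apply X_endo_of_sandwich; auto using delta1.
  apply (pseudo_aut_sandwich _ (a one)), (pseudo_aut_of_autotopism a b); auto using delta1.
Qed.

Lemma affine_mulL z : affine (mul z).
Proof.
  apply affine_of_autotopic.
  - intros u e Xe. apply X_ldivP. apply X_ker in Xe. rewrite !f_mul, Xe, mulr1. reflexivity.
  - intro u. do 2 eexists.
    eapply autotopism_ext; [| exact (autotopism_comp _ _ _ _ _ _ (autotopism_sigmaV (z ⋅ u))
                              (autotopism_comp _ _ _ _ _ _ (autotopism_sigma z) (autotopism_sigma u)))].
    intro e. unfold delta. rewrite ldivE. reflexivity.
Qed.

Lemma affine_mulR z : affine (fun w => w ⋅ z).
Proof.
  apply affine_of_autotopic.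
  - intros u e Xe. apply X_ldivP. apply X_ker in Xe. rewrite !f_mul, Xe, mulr1. reflexivity.
  - intro u. do 2 eexists.
    eapply autotopism_ext; [| exact (autotopism_comp _ _ _ _ _ _ (autotopism_sigmaV (u ⋅ z))
                              (autotopism_comp _ _ _ _ _ _ (autotopism_rho z) (autotopism_sigma u)))].
    intro e. unfold delta. rewrite ldivE. reflexivity.
Qed.

Definition affine_split (p q : Q) (al be : Q -> Q) : Prop :=
  X_endo al /\ X_endo be /\
  forall x y, X x -> X y -> (p ⋅ x) ⋅ (q ⋅ y) = (p ⋅ q) ⋅ (al x ⋅ be y).

Lemma affine_split_of_autotopism t1 t2 t3 s1 s2 :
  autotopism t1 t2 t3 -> affine s1 -> affine s2 -> affine t3 ->
  (forall w, t1 (s1 w) = w) -> (forall w, t2 (s2 w) = w) ->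
  s1 (t1 one) = one -> s2 (t2 one) = one ->
  affine_split (t1 one) (t2 one)
    (fun x => delta t3 one (delta s1 (t1 one) x)) (fun y => delta t3 one (delta s2 (t2 one) y)).
Proof.
  intros Ht As1 As2 At3 t1s1 t2s2 s1t1 s2t2.
  split; [apply X_endo_comp; [apply At3 | apply As1]|].
  split; [apply X_endo_comp; [apply At3 | apply As2]|].
  intros x y Xx Xy.
  rewrite <- (t1s1 (t1 one ⋅ x)), <- (t2s2 (t2 one ⋅ y)), Ht.
  rewrite (delta_spec s1), (delta_spec s2), s1t1, s2t2, !mul1l.
  rewrite <- (mul1l _ (delta s1 _ x ⋅ delta s2 _ y)) at 1.
  rewrite delta_spec.
  replace (t3 one) with (t1 one ⋅ t2 one) by (rewrite Ht, mulr1; reflexivity).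
  f_equal. apply (proj2 (At3 one)); [apply (proj1 (As1 (t1 one))) | apply (proj1 (As2 (t2 one)))];
    assumption.
Qed.

Lemma mul_affine_split p q : exists al be, affine_split p q al be.
Proof.
  destruct (Q_cbrt (rdiv q p)) as [x Hx]. simpl in Hx. rewrite mulr1 in Hx.
  set (t1 := fun u => p ⋅ (x ⋅ (u ⋅ inv x))).
  set (t2 := fun v => (((x ⋅ v) ⋅ x) ⋅ x) ⋅ p).
  assert (t1_one : t1 one = p) by (unfold t1; rewrite mul1l, mulgV, mulr1; reflexivity).
  assert (t2_one : t2 one = q) by (unfold t2; rewrite mulr1, <- flexible, Hx, mulrdiv; reflexivity).
  rewrite <- t1_one, <- t2_one. do 2 eexists.
  (* Since x^3 = q/p, this autotopism maps 1 to p in its first and to q in its second component. *)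
  apply (affine_split_of_autotopism t1 t2 (fun w => (p ⋅ ((x ⋅ (w ⋅ x)) ⋅ x)) ⋅ p)
           (fun w => (inv x ⋅ (inv p ⋅ w)) ⋅ x) (fun w => inv x ⋅ (((w ⋅ inv p) ⋅ inv x) ⋅ inv x))).
  - exact (autotopism_comp _ _ _ _ _ _ (autotopism_LR p)
             (autotopism_comp _ _ _ _ _ _ (autotopism_LR x) (autotopism_rho x))).
  - exact (affine_comp _ _ (affine_mulR x) (affine_comp _ _ (affine_mulL (inv x)) (affine_mulL (inv p)))).
  - exact (affine_comp _ _ (affine_mulL (inv x)) (affine_comp _ _ (affine_mulR (inv x))
            (affine_comp _ _ (affine_mulR (inv x)) (affine_mulR (inv p))))).
  - exact (affine_comp _ _ (affine_mulR p) (affine_comp _ _ (affine_mulL p)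
            (affine_comp _ _ (affine_mulR x) (affine_comp _ _ (affine_mulL x) (affine_mulR x))))).
  - intro w. unfold t1. rewrite mulgK, !mulKVg. reflexivity.
  - intro w. unfold t2. rewrite mulKVg, !mulgKV. reflexivity.
  - rewrite t1_one, mulVg, mulr1, mulVg. reflexivity.
  - rewrite t2_one, <- (rdivE p q), <- Hx, (flexible x x), !mulgK, mulVg. reflexivity.
Qed.

Lemma affine_split_inj_l p q al be :
  affine_split p q al be -> forall x x', X x -> X x' -> al x = al x' -> x = x'.
Proof.
  intros [Hal [Hbe Hpq]] x x' Xx Xx' E.
  pose proof (Hpq x one Xx X_one) as e. pose proof (Hpq x' one Xx' X_one) as e'.
  rewrite (X_endo1 _ Hbe), !mulr1 in e, e'.
  apply (mulgI p), (mulIg q). rewrite e, e', E. reflexivity.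
Qed.

Lemma affine_split_inj_r p q al be :
  affine_split p q al be -> forall y y', X y -> X y' -> be y = be y' -> y = y'.
Proof.
  intros [Hal [Hbe Hpq]] y y' Xy Xy' E.
  pose proof (Hpq one y X_one Xy) as e. pose proof (Hpq one y' X_one Xy') as e'.
  rewrite (X_endo1 _ Hal), mul1l, mulr1 in e, e'.
  apply (mulgI q), (mulgI p). rewrite e, e', E. reflexivity.
Qed.

Section AffineOver.
Context {D : Type} (inD : D -> Prop) (dmul : D -> D -> D).
Hypothesis inD_mul : forall d d', inD d -> inD d' -> inD (dmul d d').

Definition X_hom (G : D -> Q) : Prop :=
  (forall d, inD d -> X (G d)) /\
  (forall d d', inD d -> inD d' -> G (dmul d d') = G d ⋅ G d').

Lemma X_hom_ext G G' : (forall d, inD d -> G d = G' d) -> X_hom G -> X_hom G'.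
Proof. intros E [XG G_mul]. split; intros; rewrite <- !E; auto. Qed.

Lemma X_hom_split al be Fs Fr :
  X_endo al -> X_endo be -> X_hom Fs -> X_hom Fr -> X_hom (fun d => al (Fs d) ⋅ be (Fr d)).
Proof.
  intros Hal Hbe [XFs Fs_mul] [XFr Fr_mul]. split.
  - intros d Hd. apply X_mul; [apply Hal | apply Hbe]; auto.
  - intros d d' Hd Hd'. rewrite Fs_mul, Fr_mul by assumption.
    symmetry. apply X_endo_split; auto.
Qed.

Lemma X_hom_of_split al be Fs Fr F :
  X_endo al -> X_endo be -> (forall y y', X y -> X y' -> be y = be y' -> y = y') ->
  X_hom Fs -> X_hom Fr -> (forall d, inD d -> X (F d)) ->
  (forall d, inD d -> Fr d = al (Fs d) ⋅ be (F d)) -> X_hom F.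
Proof.
  intros Hal Hbe be_inj [XFs Fs_mul] [XFr Fr_mul] XF HFr. split; [exact XF|].
  intros d d' Hd Hd'. apply be_inj; auto using X_mul.
  apply (mulgI (al (Fs (dmul d d')))).
  rewrite <- HFr, Fr_mul, !HFr, Fs_mul by auto. apply X_endo_split; auto.
Qed.

Definition affine_over (c : Q) (T : D -> Q) : Prop := X_hom (fun d => ldiv c (T d)).

Lemma affine_over_const c : affine_over c (fun _ => c).
Proof. split; intros; rewrite ldivv; [apply X_one | rewrite mulr1; reflexivity]. Qed.

Lemma affine_over_mul S R TS TR :
  affine_over S TS -> affine_over R TR -> affine_over (S ⋅ R) (fun d => TS d ⋅ TR d).
Proof.
  intros HS HR. destruct (mul_affine_split S R) as [al [be [Hal [Hbe HSR]]]].
  apply (X_hom_ext (fun d => al (ldiv S (TS d)) ⋅ be (ldiv R (TR d)))).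
  - intros d Hd. apply (mulgI (S ⋅ R)).
    rewrite mulldiv, <- HSR, !mulldiv; [reflexivity | apply HS | apply HR]; auto.
  - apply X_hom_split; auto.
Qed.

Lemma affine_over_ldiv S R TS TR :
  affine_over S TS -> affine_over R TR ->
  affine_over (ldiv S R) (fun d => ldiv (TS d) (TR d)).
Proof.
  intros HS HR. destruct (mul_affine_split S (ldiv S R)) as [al [be Hsplit]].
  pose proof Hsplit as [Hal [Hbe HSR]].
  assert (XF : forall d, inD d -> X (ldiv (ldiv S R) (ldiv (TS d) (TR d)))).
  { intros d Hd. apply X_ldivP. rewrite !(loop_hom_ldiv f_mul).
    f_equal; apply X_ldivP; [apply HS | apply HR]; auto. }
  apply (X_hom_of_split al be _ _ _ Hal Hbe (affine_split_inj_r _ _ _ _ Hsplit) HS HR XF).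
  intros d Hd. apply (mulgI R). rewrite mulldiv.
  pose proof (HSR _ _ (proj1 HS d Hd) (XF d Hd)) as E.
  rewrite !mulldiv in E. exact E.
Qed.

Lemma affine_over_rdiv S R TS TR :
  affine_over S TS -> affine_over R TR ->
  affine_over (rdiv S R) (fun d => rdiv (TS d) (TR d)).
Proof.
  intros HS HR. destruct (mul_affine_split (rdiv S R) R) as [al [be Hsplit]].
  pose proof Hsplit as [Hal [Hbe HSR]].
  assert (XF : forall d, inD d -> X (ldiv (rdiv S R) (rdiv (TS d) (TR d)))).
  { intros d Hd. apply X_ldivP. rewrite !(loop_hom_rdiv f_mul).
    f_equal; apply X_ldivP; [apply HS | apply HR]; auto. }
  apply (X_hom_of_split be al _ _ _ Hbe Hal (affine_split_inj_l _ _ _ _ Hsplit) HR HS XF).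
  intros d Hd. apply (mulgI S). rewrite mulldiv.
  pose proof (HSR _ _ (XF d Hd) (proj1 HR d Hd)) as E.
  rewrite !mulldiv, !mulrdiv in E.
  rewrite (X_comm (be _) (al _)); [exact E | apply Hbe, HR | apply Hal, XF]; auto.
Qed.

End AffineOver.

Definition tuple_mul (e u : nat -> Q) : nat -> Q := fun i => e i ⋅ u i.

Definition X_tuples (d : (nat -> Q) * (nat -> Q)) : Prop :=
  forall i, X (fst d i) /\ X (snd d i).

Definition tuples_mul (d d' : (nat -> Q) * (nat -> Q)) : (nat -> Q) * (nat -> Q) :=
  (tuple_mul (fst d) (fst d'), tuple_mul (snd d) (snd d')).

Lemma X_tuples_mul d d' : X_tuples d -> X_tuples d' -> X_tuples (tuples_mul d d').
Proof. intros Hd Hd' i. split; apply X_mul; apply Hd || apply Hd'. Qed.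

Lemma term_affine t a c :
  affine_over X_tuples tuples_mul (teval a c t)
    (fun d => teval (tuple_mul a (fst d)) (tuple_mul c (snd d)) t).
Proof.
  induction t as [n|n| |s IHs r IHr|s IHs r IHr|s IHs r IHr]; simpl.
  - split; [intros d Hd | intros d d' _ _]; unfold tuples_mul, tuple_mul; simpl;
      rewrite !ldivK; [apply (proj1 (Hd n)) | reflexivity].
  - split; [intros d Hd | intros d d' _ _]; unfold tuples_mul, tuple_mul; simpl;
      rewrite !ldivK; [apply (proj2 (Hd n)) | reflexivity].
  - apply affine_over_const.
  - exact (affine_over_mul _ _ X_tuples_mul _ _ _ _ IHs IHr).
  - exact (affine_over_ldiv _ _ X_tuples_mul _ _ _ _ IHs IHr).
  - exact (affine_over_rdiv _ _ X_tuples_mul _ _ _ _ IHs IHr).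
Qed.

Lemma cong_of_X_abelian : abelian_congruence Q (cong_of Q X).
Proof.
  intros t a b c d Hab Hcd Ht.
  set (ux := fun i => ldiv (a i) (b i)). set (uy := fun i => ldiv (c i) (d i)).
  set (o := fun _ : nat => (one : Q)).
  set (T := fun d => teval (tuple_mul a (fst d)) (tuple_mul c (snd d)) t).
  assert (Xux : forall i, X (ux i)).
  { intro i. unfold ux. destruct (Hab i) as [x [Xx ->]]. rewrite ldivK. exact Xx. }
  assert (Xuy : forall i, X (uy i)).
  { intro i. unfold uy. destruct (Hcd i) as [y [Xy ->]]. rewrite ldivK. exact Xy. }
  assert (Tbc : teval b c t = T (ux, o)).
  { apply teval_ext; intro i; unfold tuple_mul; simpl; symmetry; [apply mulldiv | apply mulr1]. }
  assert (Tbd : teval b d t = T (tuples_mul (ux, o) (o, uy))).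
  { apply teval_ext; intro i; unfold tuples_mul, tuple_mul, o; simpl;
      rewrite ?mulr1, ?mul1l; symmetry; apply mulldiv. }
  assert (Tad : teval a d t = T (o, uy)).
  { apply teval_ext; intro i; unfold tuple_mul; simpl; symmetry; [apply mulr1 | apply mulldiv]. }
  destruct (term_affine t a c) as [_ T_mul].
  assert (T_split : ldiv (teval a c t) (T (tuples_mul (ux, o) (o, uy)))
                    = ldiv (teval a c t) (T (ux, o)) ⋅ ldiv (teval a c t) (T (o, uy))).
  { apply T_mul; intro i; split; auto using X_one. }
  rewrite <- Tad, <- Ht, ldivv, mulr1 in T_split.
  rewrite Tbc, Tbd, <- (mulldiv _ (teval a c t) (T (tuples_mul _ _))), T_split, mulldiv.
  reflexivity.
Qed.

End Cosets.
End MoufangLoop.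

Theorem theorem4p3 (Q : Loop) (X : Q -> Prop) :
  Moufang Q -> divisible Q 3 ->
  normal_subloop Q X -> sub_commutative_group Q X -> sub_divisible Q X 2 ->
  abelian_congruence Q (cong_of Q X).
Proof.
  intros HM Q_cbrt [L [f [f_mul X_ker]]] [X_assoc X_comm] X_sqrt.
  exact (cong_of_X_abelian Q HM X L f f_mul X_ker X_assoc X_comm X_sqrt Q_cbrt).
Qed.
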